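(* In the setting described in the context, let $\gamma \in (0,\frac12)$, $\lambda_0 > 1$, $0 \leq k \leq q$, and $x \in \Omega$. Then there exist nonnegative real numbers $a_0,\dots,a_k$ with $\sum_{i=0}^k a_i = 1$ and $d\hat u_k = \sum_{i=0}^k a_i \, du_i$ at $x$. Moreover, $a_i = 0$ for every $0 \leq i \leq k$ satisfying $u_i(x) < \hat u_k(x) - 2k\lambda_i^{-1}$.
   Context: $n\ge 3$, $u_0,\dots,u_q$ are non-constant linear (affine) functions on $\mathbb{R}^n$, and $\Omega=\bigcap_{m=0}^q\{u_m\le 0\}$ is a compact convex polytope with non-empty interior. Fix a smooth even function $\eta:\mathbb{R}\to\mathbb{R}$ with $\eta(t)=|t|$ for $|t|\ge \frac12$ and $\eta''\ge 0$ everywhere. For $\gamma\in(0,\frac12)$ and $\lambda_0>1$ set $\lambda_k=\gamma^{-k}\lambda_0$ for $1\le k\le q$. Define $\hat u_0=u_0$ and, for $1\le k\le q$, $\hat u_k=\frac12\big(\hat u_{k-1}+u_k+\lambda_k^{-1}\eta(\lambda_k(\hat u_{k-1}-u_k))\big)$. *)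

From HB Require Import structures.
From mathcomp Require Import all_boot all_order all_algebra.
From mathcomp Require Import all_classical all_reals all_analysis.
Set Implicit Arguments. Unset Strict Implicit. Unset Printing Implicit Defensive.
Import Order.TTheory GRing.Theory Num.Theory.
Import numFieldNormedType.Exports.
Local Open Scope classical_set_scope.
Local Open Scope ring_scope.

Definition smooth_fun (R : realType) (f : R -> R) : Prop :=
  forall (m : nat) (t : R), derivable (derive1n m f) t 1.

Definition nonconst_affine (R : realType) (n : nat) (u : 'rV[R]_n -> R) : Prop :=
  exists (c : 'rV[R]_n) (b : R), c != 0 /\
    forall x : 'rV[R]_n, u x = \sum_(j < n) c 0 j * x 0 j + b.

Definition lam (R : realType) (gamma lam0 : R) (k : nat) : R := lam0 / gamma ^+ k.

Fixpoint hatu (R : realType) (n : nat) (u : nat -> 'rV[R]_n -> R) (eta : R -> R)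
    (gamma lam0 : R) (k : nat) : 'rV[R]_n -> R :=
  match k with
  | 0 => u 0
  | k'.+1 => fun x =>
      let h := hatu u eta gamma lam0 k' x in
      let l := lam gamma lam0 k'.+1 in
      2^-1 * (h + u k'.+1 x + l^-1 * eta (l * (h - u k'.+1 x)))
  end.

Definition Omega (R : realType) (n q : nat) (u : nat -> 'rV[R]_n -> R) : set 'rV[R]_n :=
  [set x | forall m, (m <= q)%N -> u m x <= 0].

From mathcomp Require Import all_boot all_order all_algebra.
From mathcomp Require Import all_classical all_reals all_analysis.
From mathcomp Require Import lra ring.
Set Implicit Arguments.
Unset Strict Implicit.
Unset Printing Implicit Defensive.

Import Order.TTheory GRing.Theory Num.Theory.
Import numFieldNormedType.Exports.
Local Open Scope classical_set_scope.
Local Open Scope ring_scope.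

(* hatu_{k+1} = smooth_max l hatu_k u_{k+1} with l = lam_{k+1}, where
   smooth_max l a b = (a + b + l^-1 eta (l (a - b))) / 2 has differential
   t da + (1 - t) db, t = (1 + eta'(s)) / 2, s = l (a - b).  Convexity and
   eta = |.| far out give |eta'| <= 1, so t is in [0, 1] and induction on k
   yields convex weights.  They also give eta(s) + s <= 1 unless eta'(s) = 1 and
   eta(s) - s <= 1 unless eta'(s) = -1; as smooth_max - b = l^-1 (eta(s) + s) / 2
   and smooth_max - a = l^-1 (eta(s) - s) / 2, exceeding u_{k+1} (resp. hatu_k)
   by more than l^-1 forces t = 1 (resp. t = 0).  For i <= k, a weight not yet
   zero at step k (u_i >= hatu_k - 2 k lam_i^-1) can only meet the threshold at
   step k+1 if hatu_{k+1} - hatu_k > 2 lam_i^-1 >= l^-1. *)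

Lemma sum_extend_weights (R : comPzRingType) k (c d : R) (a f : nat -> R) :
  \sum_(i < k.+2) (if (i <= k)%N then c * a i else d) * f i =
  c * \sum_(i < k.+1) a i * f i + d * f k.+1.
Proof.
rewrite big_ord_recr /= ltnn mulr_sumr; congr (_ + _).
by apply: eq_bigr => i _; rewrite /= -ltnS ltn_ord mulrA.
Qed.

Lemma lamV_gt0 (R : realType) (gamma lam0 : R) i :
  0 < gamma -> 0 < lam0 -> 0 < (lam gamma lam0 i)^-1.
Proof. by move=> g_gt0 l0_gt0; rewrite /lam invf_div divr_gt0 // exprn_gt0. Qed.

Lemma lamV_le (R : realType) (gamma lam0 : R) i j :
  0 < gamma -> gamma <= 1 -> 0 < lam0 -> (i <= j)%N ->
  (lam gamma lam0 j)^-1 <= (lam gamma lam0 i)^-1.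
Proof.
move=> g_gt0 g_le1 l0_gt0 ij; rewrite /lam !invf_div ler_pM2r ?invr_gt0 //.
exact: ler_wiXn2l (ltW g_gt0) g_le1 _ _ ij.
Qed.

Lemma affine_differentiable (R : realType) n (f : 'rV[R]_n -> R) (c : 'rV[R]_n) b x :
  (forall y, f y = \sum_(j < n) c 0 j * y 0 j + b) -> differentiable f x.
Proof.
move=> fE; have -> : f = \sum_(j < n) (c 0 j *: (fun y : 'rV[R]_n => y 0 j)) + cst b.
  by apply/funext => y; rewrite fE fct_sumE.
apply: differentiableD => //; apply: differentiable_sum => j.
exact/differentiableZ/differentiable_coord.
Qed.

Section SmoothMax.
Variables (R : realType) (eta : R -> R).
Hypotheses (eta_derivable : forall t, derivable eta t 1)
  (derive1_eta_derivable : forall t, derivable (derive1 eta) t 1)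
  (eta_convex : forall t, 0 <= derive1 (derive1 eta) t)
  (eta_abs : forall t, 2^-1 <= `|t| -> eta t = `|t|).

Lemma derive1_eta_ndecr s t : s <= t -> derive1 eta s <= derive1 eta t.
Proof.
move=> st; apply: (@ger0_derive1_ndecr _ _ s t) => //.
by apply: derivable_within_continuous => y _; exact: derive1_eta_derivable.
Qed.

Lemma derive1_eta_gt t : 2^-1 < t -> derive1 eta t = 1.
Proof.
move=> ht; rewrite derive1E (@near_eq_derive _ _ _ _ id) ?derive_id //.
apply: filterS (lt_nbhsr ht) => y hy.
by rewrite eta_abs gtr0_norm //; lra.
Qed.

Lemma derive1_eta_lt t : t < - 2^-1 -> derive1 eta t = -1.
Proof.
move=> ht; rewrite derive1E (@near_eq_derive _ _ _ _ -%R).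
  by rewrite (@derive_val _ _ _ _ _ _ _ (is_deriveNid t 1)).
apply: filterS (lt_nbhsl ht) => y hy.
by rewrite eta_abs ltr0_norm //; lra.
Qed.

Lemma derive1_eta_bound t : -1 <= derive1 eta t <= 1.
Proof.
apply/andP; split.
  rewrite -(@derive1_eta_lt (Num.min t (-1))) ?derive1_eta_ndecr ?ge_min ?lexx //.
  by rewrite gt_min; apply/orP; right; lra.
rewrite -(@derive1_eta_gt (Num.max t 1)) ?derive1_eta_ndecr ?le_max ?lexx //.
by rewrite lt_max; apply/orP; right; lra.
Qed.

Lemma derive1_eta_eq1 s : 1 < eta s + s -> derive1 eta s = 1.
Proof.
move=> hs; apply: derive1_eta_gt; rewrite ltNge; apply/negP => s_le.
have d_eta_id y : derivable (eta + id) y 1.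
  by apply: derivableD => //; exact: derivable_id.
have : eta s + s <= eta 2^-1 + 2^-1.
  apply: (@ger0_derive1_ndecrNy _ (eta + id) 2^-1) => //.
  - move=> y _; rewrite derive1E deriveD ?derive_id -?derive1E //.
    by have := derive1_eta_bound y; lra.
  - by apply: derivable_within_continuous => y _.
by rewrite [eta 2^-1]eta_abs ger0_norm //; lra.
Qed.

Lemma derive1_eta_eqN1 s : 1 < eta s - s -> derive1 eta s = -1.
Proof.
move=> hs; apply: derive1_eta_lt; rewrite ltNge; apply/negP => s_ge.
have d_eta_id y : derivable (eta - id) y 1.
  by apply: derivableB => //; exact: derivable_id.
have : eta s - s <= eta (- 2^-1) - - 2^-1.
  apply: (@ler0_derive1_nincry _ (eta - id) (- 2^-1)) => //.
  - move=> y _; rewrite derive1E deriveB ?derive_id -?derive1E //.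
    by have := derive1_eta_bound y; lra.
  - by apply: derivable_within_continuous => y _.
by rewrite [eta (- 2^-1)]eta_abs normrN ger0_norm //; lra.
Qed.

Definition smooth_max (l a b : R) : R := 2^-1 * (a + b + l^-1 * eta (l * (a - b))).

Lemma derive1_eta_smooth_max_r l a b : 0 < l ->
  l^-1 < smooth_max l a b - b -> derive1 eta (l * (a - b)) = 1.
Proof.
move=> l_gt0; set s := l * (a - b).
have -> : smooth_max l a b - b = l^-1 * (2^-1 * (eta s + s)).
  by rewrite /smooth_max /s; field; rewrite gt_eqF.
rewrite ltr_pMr ?invr_gt0 // => hs; apply: derive1_eta_eq1; lra.
Qed.

Lemma derive1_eta_smooth_max_l l a b : 0 < l ->
  l^-1 < smooth_max l a b - a -> derive1 eta (l * (a - b)) = -1.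
Proof.
move=> l_gt0; set s := l * (a - b).
have -> : smooth_max l a b - a = l^-1 * (2^-1 * (eta s - s)).
  by rewrite /smooth_max /s; field; rewrite gt_eqF.
rewrite ltr_pMr ?invr_gt0 // => hs; apply: derive1_eta_eqN1; lra.
Qed.

Lemma is_diff_smooth_max (V : normedModType R) (h w : V -> R) (l : R) (x : V) :
  l != 0 -> differentiable h x -> differentiable w x ->
  let e := derive1 eta (l * (h x - w x)) in
  is_diff x (fun y => smooth_max l (h y) (w y))
    (fun v => 2^-1 * (1 + e) * 'd h x v + 2^-1 * (1 - e) * 'd w x v).
Proof.
move=> l_neq0 /differentiableP dh /differentiableP dw e.
have de : is_diff (l * (h x - w x)) eta ( *:%R^~ e).
  by rewrite -deriv1E //; apply/differentiableP/derivable1_diffP.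
apply: is_diff_eq (is_diffZ 2^-1 (is_diffD (is_diffD dh dw)
  (is_diffZ l^-1 (is_diff_comp (is_diffZ l (is_diffB dh dw)) de)))) _.
by apply/funext => v; rewrite !fctE /GRing.scale /=; field.
Qed.

Section HatU.
Variables (n : nat) (u : nat -> 'rV[R]_n -> R) (gamma lam0 : R) (x : 'rV[R]_n).
Hypotheses (gamma_gt0 : 0 < gamma) (gamma_le1 : gamma <= 1) (lam0_gt0 : 0 < lam0).

Local Notation uhat := (hatu u eta gamma lam0).

Lemma hatuS k : uhat k.+1 x = smooth_max (lam gamma lam0 k.+1) (uhat k x) (u k.+1 x).
Proof. by []. Qed.

Definition hatu_weights k (a : nat -> R) : Prop :=
  (forall i, (i <= k)%N -> 0 <= a i) /\
  \sum_(i < k.+1) a i = 1 /\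
  differentiable (uhat k) x /\
  (forall v, 'd (uhat k) x v = \sum_(i < k.+1) a i * 'd (u i) x v) /\
  (forall i, (i <= k)%N ->
     u i x < uhat k x - 2 * k%:R * (lam gamma lam0 i)^-1 -> a i = 0).

Lemma hatu_weights0 : differentiable (u 0) x -> hatu_weights 0 (fun=> 1).
Proof.
move=> du0; split=> //; split; first by rewrite big_ord1.
split=> //; split; first by move=> v; rewrite big_ord1 mul1r.
by move=> i; rewrite leqn0 => /eqP ->; rewrite mulr0 mul0r subr0 ltxx.
Qed.

Lemma derive1_eta_hatuS_r k :
  u k.+1 x < uhat k.+1 x - 2 * k.+1%:R * (lam gamma lam0 k.+1)^-1 ->
  derive1 eta (lam gamma lam0 k.+1 * (uhat k x - u k.+1 x)) = 1.
Proof.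
set l := lam gamma lam0 k.+1; rewrite hatuS -/l => hlt.
have lV_gt0 : 0 < l^-1 by exact: lamV_gt0.
apply: derive1_eta_smooth_max_r; first by rewrite -invr_gt0.
have : 1 <= k.+1%:R :> R by rewrite ler1n.
nra.
Qed.

Lemma derive1_eta_hatuS_l k i : (i <= k)%N ->
  uhat k x - 2 * k%:R * (lam gamma lam0 i)^-1 <= u i x ->
  u i x < uhat k.+1 x - 2 * k.+1%:R * (lam gamma lam0 i)^-1 ->
  derive1 eta (lam gamma lam0 k.+1 * (uhat k x - u k.+1 x)) = -1.
Proof.
set l := lam gamma lam0 k.+1; rewrite hatuS -/l -natr1 => ik hge hlt.
have lV_gt0 : 0 < l^-1 by exact: lamV_gt0.
have lV_le : l^-1 <= (lam gamma lam0 i)^-1 by apply: lamV_le => //; exact: leqW.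
apply: derive1_eta_smooth_max_l; first by rewrite -invr_gt0.
nra.
Qed.

Lemma hatu_weightsS k a : differentiable (u k.+1) x ->
  hatu_weights k a -> exists a', hatu_weights k.+1 a'.
Proof.
move=> dw [a_ge0 [a_sum [dh [dhE a_zero]]]].
have l_neq0 : lam gamma lam0 k.+1 != 0 by rewrite -invr_eq0 lt0r_neq0 ?lamV_gt0.
have /andP[e_ge e_le] := derive1_eta_bound (lam gamma lam0 k.+1 * (uhat k x - u k.+1 x)).
have [dF dFE] := is_diff_smooth_max l_neq0 dh dw.
set e := derive1 eta _ in e_ge e_le dFE *.
exists (fun i => if (i <= k)%N then 2^-1 * (1 + e) * a i else 2^-1 * (1 - e)).
split; [|split; [|split; [|split]]] => //.
- move=> i _; case: ifP => ik; last lra.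
  by apply: mulr_ge0; [lra | exact: a_ge0].
- under eq_bigr do rewrite -(mulr1 (if _ then _ else _)).
  rewrite (sum_extend_weights _ _ _ _ (fun=> 1)).
  under eq_bigr do rewrite mulr1.
  by rewrite a_sum; lra.
- by move=> v; rewrite dFE (sum_extend_weights _ _ _ _ (fun i => 'd (u i) x v)) dhE.
move=> i; rewrite leq_eqVlt => /orP[/eqP -> | ik].
  by rewrite ltnn => /derive1_eta_hatuS_r; rewrite -/e => ->; rewrite subrr mulr0.
rewrite ltnS in ik; rewrite ik.
have [/(a_zero i ik) -> _ | hge] := ltP (u i x) (uhat k x - 2 * k%:R * (lam gamma lam0 i)^-1).
  by rewrite mulr0.
move=> /(derive1_eta_hatuS_l ik hge); rewrite -/e => ->.
by rewrite addrN mulr0 mul0r.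
Qed.

Lemma hatu_weights_exist k : (forall i, (i <= k)%N -> differentiable (u i) x) ->
  exists a, hatu_weights k a.
Proof.
elim: k => [|k IH] du; first by exists (fun=> 1); exact/hatu_weights0/du.
have [a ha] := IH (fun i ik => du i (leqW ik)).
exact: hatu_weightsS (du _ (leqnn _)) ha.
Qed.

End HatU.

End SmoothMax.

Theorem lemma2p9 (R : realType) (n q : nat) (u : nat -> 'rV[R]_n -> R)
    (eta : R -> R) (gamma lam0 : R) (k : nat) (x : 'rV[R]_n) :
  (3 <= n)%N ->
  (forall m, (m <= q)%N -> nonconst_affine (u m)) ->
  compact (Omega q u) ->
  (Omega q u)° !=set0 ->
  smooth_fun eta ->
  (forall t, eta (- t) = eta t) ->
  (forall t, 2^-1 <= `|t| -> eta t = `|t|) ->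
  (forall t, 0 <= derive1n 2 eta t) ->
  0 < gamma < 2^-1 ->
  1 < lam0 ->
  (k <= q)%N ->
  x \in Omega q u ->
  exists a : nat -> R,
    (forall i, (i <= k)%N -> 0 <= a i) /\
    \sum_(i < k.+1) a i = 1 /\
    differentiable (hatu u eta gamma lam0 k) x /\
    (forall v : 'rV[R]_n,
       'd (hatu u eta gamma lam0 k) x v = \sum_(i < k.+1) a i * 'd (u i) x v) /\
    (forall i, (i <= k)%N ->
       u i x < hatu u eta gamma lam0 k x - 2 * k%:R * (lam gamma lam0 i)^-1 ->
       a i = 0).
Proof.
move=> _ u_affine _ _ eta_smooth _ eta_abs eta_convex /andP[gamma_gt0 gamma_lt] lam0_gt1 kq _.
have eta_derivable t : derivable eta t 1.
  by have := eta_smooth 0 t; rewrite derive1n0.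
have derive1_eta_derivable t : derivable (derive1 eta) t 1.
  by have := eta_smooth 1 t; rewrite derive1n1.
have derive2_eta_ge0 t : 0 <= derive1 (derive1 eta) t.
  by have := eta_convex t; rewrite derive1nS derive1n1.
have du i : (i <= k)%N -> differentiable (u i) x.
  by move=> ik; have [c [b [_ /affine_differentiable]]] := u_affine i (leq_trans ik kq).
have gamma_le1 : gamma <= 1 by lra.
have lam0_gt0 : 0 < lam0 by lra.
have [a ha] := hatu_weights_exist eta_derivable derive1_eta_derivable
  derive2_eta_ge0 eta_abs gamma_gt0 gamma_le1 lam0_gt0 du.
by exists a.
Qed.
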